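(* Let $\mathcal{C}_1,\mathcal{C}_2$ be symmetric monoidal anti-involutive categories with duals, each equipped with a dual functor with its canonical anti-involutive structure. Let $(F,\phi)\colon\mathcal{C}_1\to\mathcal{C}_2$ be a symmetric monoidal anti-involutive functor, and denote by $\zeta_x\colon F(x^* )\to F(x)^*$ the canonical isomorphism expressing that $F$ preserves duals. Then $\zeta$ is a monoidal anti-involutive natural isomorphism between the symmetric monoidal anti-involutive functors $F\circ(\cdot)^*$ and $(\cdot)^*\circ F$ from $\mathcal{C}_1$ to $\mathcal{C}_2^{\mathrm{op}}$.
   Context: Symmetric monoidal anti-involutive category $(\mathcal{C},d,\eta)$: symmetric monoidal category, symmetric monoidal functor $d\colon\mathcal{C}\to\mathcal{C}^{\mathrm{op}}$, monoidal natural isomorphism $\eta\colon\mathrm{id}\Rightarrow d^2$ with $d(\eta_x)\circ\eta_{dx}=\mathrm{id}$; $\mathcal{C}^{\mathrm{op}}$ gets the anti-involution $d$ with $\eta^{-1}$. A symmetric monoidal anti-involutive functor $(F,\phi)$: symmetric monoidal functor with monoidal natural isomorphism $\phi\colon F\circ d\Rightarrow d\circ F$ with $\phi_{dx}\circ F(\eta_x)=d(\phi_x)\circ\eta_{F(x)}$; composites of such are again such in the evident way. An anti-involutive natural transformation $u\colon(F,\phi)\Rightarrow(G,\psi)$ satisfies $\phi_x=d(u_x)\circ\psi_x\circ u_{dx}$. A dual functor comes from choosing duals $(x^*,\mathrm{ev}_x,\mathrm{coev}_x)$; its canonical anti-involutive structure is the isomorphism $d(x^* )\cong(dx)^*$ given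 by uniqueness of duals (both are duals of $dx$). For a symmetric monoidal functor $F$, $F(x^* )$ is a dual of $F(x)$ via the image of the duality data, and $\zeta_x$ is the unique isomorphism to the chosen dual $F(x)^*$ compatible with evaluations and coevaluations. *)

(* Morphism equality is Leibniz equality.
   Design: "raw" structures carry the data only; the axioms are separate Prop
   records.  This lets opposite categories, opposite functors and composites be
   defined purely on data. *)

Record RawSMC := {
  ob : Type;
  hom : ob -> ob -> Type;
  idm : forall x, hom x x;
  comp : forall x y z, hom y z -> hom x y -> hom x z;
  tens : ob -> ob -> ob;
  tensm : forall x x' y y', hom x x' -> hom y y' -> hom (tens x y) (tens x' y');
  tunit : ob;
  assoc : forall x y z, hom (tens (tens x y) z) (tens x (tens y z));
  assoc_inv : forall x y z, hom (tens x (tens y z)) (tens (tens x y) z);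
  lunit : forall x, hom (tens tunit x) x;
  lunit_inv : forall x, hom x (tens tunit x);
  runit : forall x, hom (tens x tunit) x;
  runit_inv : forall x, hom x (tens x tunit);
  braid : forall x y, hom (tens x y) (tens y x)
}.

Arguments comp _ {x y z} g f.
Arguments tensm _ {x x' y y'} f g.

Definition is_iso (C : RawSMC) (x y : ob C) (f : hom C x y) (g : hom C y x) : Prop :=
  comp C g f = idm C x /\ comp C f g = idm C y.
Arguments is_iso C {x y} f g.

Record SMCLaws (C : RawSMC) : Prop := {
  comp_idl : forall x y (f : hom C x y), comp C (idm C y) f = f;
  comp_idr : forall x y (f : hom C x y), comp C f (idm C x) = f;
  comp_assoc : forall w x y z (h : hom C y z) (g : hom C x y) (f : hom C w x),
      comp C h (comp C g f) = comp C (comp C h g) f;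
  tensm_id : forall x y, tensm C (idm C x) (idm C y) = idm C (tens C x y);
  tensm_comp : forall x x' x'' y y' y'' (f : hom C x x') (f' : hom C x' x'')
      (g : hom C y y') (g' : hom C y' y''),
      tensm C (comp C f' f) (comp C g' g) = comp C (tensm C f' g') (tensm C f g);
  assoc_iso : forall x y z, is_iso C (assoc C x y z) (assoc_inv C x y z);
  lunit_iso : forall x, is_iso C (lunit C x) (lunit_inv C x);
  runit_iso : forall x, is_iso C (runit C x) (runit_inv C x);
  assoc_nat : forall x x' y y' z z' (f : hom C x x') (g : hom C y y') (h : hom C z z'),
      comp C (assoc C x' y' z') (tensm C (tensm C f g) h)
      = comp C (tensm C f (tensm C g h)) (assoc C x y z);
  lunit_nat : forall x y (f : hom C x y),
      comp C (lunit C y) (tensm C (idm C (tunit C)) f) = comp C f (lunit C x);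
  runit_nat : forall x y (f : hom C x y),
      comp C (runit C y) (tensm C f (idm C (tunit C))) = comp C f (runit C x);
  braid_nat : forall x x' y y' (f : hom C x x') (g : hom C y y'),
      comp C (braid C x' y') (tensm C f g) = comp C (tensm C g f) (braid C x y);
  pentagon : forall w x y z,
      comp C (assoc C w x (tens C y z)) (assoc C (tens C w x) y z)
      = comp C (tensm C (idm C w) (assoc C x y z))
          (comp C (assoc C w (tens C x y) z) (tensm C (assoc C w x y) (idm C z)));
  triangle : forall x y,
      comp C (tensm C (idm C x) (lunit C y)) (assoc C x (tunit C) y)
      = tensm C (runit C x) (idm C y);
  hexagon : forall x y z,
      comp C (assoc C y z x) (comp C (braid C x (tens C y z)) (assoc C x y z))
      = comp C (tensm C (idm C y) (braid C x z))
          (comp C (assoc C y x z) (tensm C (braid C x y) (idm C z)));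
  braid_invol : forall x y, comp C (braid C y x) (braid C x y) = idm C (tens C x y)
}.

Definition op (C : RawSMC) : RawSMC := {|
  ob := ob C;
  hom := fun x y => hom C y x;
  idm := fun x => idm C x;
  comp := fun x y z g f => comp C f g;
  tens := tens C;
  tensm := fun x x' y y' f g => tensm C f g;
  tunit := tunit C;
  assoc := fun x y z => assoc_inv C x y z;
  assoc_inv := fun x y z => assoc C x y z;
  lunit := fun x => lunit_inv C x;
  lunit_inv := fun x => lunit C x;
  runit := fun x => runit_inv C x;
  runit_inv := fun x => runit C x;
  braid := fun x y => braid C y x
|}.

Record FunData (C D : RawSMC) := {
  fob : ob C -> ob D;
  fmap : forall x y, hom C x y -> hom D (fob x) (fob y);
  fmu : forall x y, hom D (tens D (fob x) (fob y)) (fob (tens C x y));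
  fmu_inv : forall x y, hom D (fob (tens C x y)) (tens D (fob x) (fob y));
  feps : hom D (tunit D) (fob (tunit C));
  feps_inv : hom D (fob (tunit C)) (tunit D)
}.
Arguments fob {C D} f x.
Arguments fmap {C D} f {x y} _.
Arguments fmu {C D} f x y.
Arguments fmu_inv {C D} f x y.
Arguments feps {C D} f.
Arguments feps_inv {C D} f.

Record SMFunctorLaws (C D : RawSMC) (F : FunData C D) : Prop := {
  fmap_id : forall x, fmap F (idm C x) = idm D (fob F x);
  fmap_comp : forall x y z (g : hom C y z) (f : hom C x y),
      fmap F (comp C g f) = comp D (fmap F g) (fmap F f);
  fmu_iso : forall x y, is_iso D (fmu F x y) (fmu_inv F x y);
  feps_iso : is_iso D (feps F) (feps_inv F);
  fmu_nat : forall x x' y y' (f : hom C x x') (g : hom C y y'),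
      comp D (fmap F (tensm C f g)) (fmu F x y)
      = comp D (fmu F x' y') (tensm D (fmap F f) (fmap F g));
  fmu_assoc : forall x y z,
      comp D (fmap F (assoc C x y z))
        (comp D (fmu F (tens C x y) z) (tensm D (fmu F x y) (idm D (fob F z))))
      = comp D (fmu F x (tens C y z))
          (comp D (tensm D (idm D (fob F x)) (fmu F y z))
             (assoc D (fob F x) (fob F y) (fob F z)));
  fmu_lunit : forall x,
      comp D (fmap F (lunit C x))
        (comp D (fmu F (tunit C) x) (tensm D (feps F) (idm D (fob F x))))
      = lunit D (fob F x);
  fmu_runit : forall x,
      comp D (fmap F (runit C x))
        (comp D (fmu F x (tunit C)) (tensm D (idm D (fob F x)) (feps F)))
      = runit D (fob F x);
  fmu_braid : forall x y,
      comp D (fmap F (braid C x y)) (fmu F x y)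
      = comp D (fmu F y x) (braid D (fob F x) (fob F y))
}.
Arguments SMFunctorLaws {C D} F.

Definition fop (C D : RawSMC) (F : FunData C D) : FunData (op C) (op D) :=
  Build_FunData (op C) (op D)
    (fob F)
    (fun x y (f : hom (op C) x y) => @fmap C D F y x f)
    (fun x y => fmu_inv F x y)
    (fun x y => fmu F x y)
    (feps_inv F)
    (feps F).
Arguments fop {C D} F.

Definition fcomp (C D E : RawSMC) (G : FunData D E) (F : FunData C D) : FunData C E :=
  Build_FunData C E
    (fun x => fob G (fob F x))
    (fun x y f => @fmap D E G _ _ (@fmap C D F x y f))
    (fun x y => comp E (fmap G (fmu F x y)) (fmu G (fob F x) (fob F y)))
    (fun x y => comp E (fmu_inv G (fob F x) (fob F y)) (fmap G (fmu_inv F x y)))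
    (comp E (fmap G (feps F)) (feps G))
    (comp E (feps_inv G) (fmap G (feps_inv F))).
Arguments fcomp {C D E} G F.

Definition idopop (C : RawSMC) : FunData C (op (op C)) :=
  Build_FunData C (op (op C))
    (fun x => x)
    (fun x y (f : hom C x y) => f)
    (fun x y => idm C (tens C x y))
    (fun x y => idm C (tens C x y))
    (idm C (tunit C))
    (idm C (tunit C)).

Definition NatData (C D : RawSMC) (F G : FunData C D) :=
  forall x : ob C, hom D (fob F x) (fob G x).
Arguments NatData {C D} F G.

Record MonNatIsoLaws (C D : RawSMC) (F G : FunData C D) (u : NatData F G) : Prop := {
  nat_natural : forall x y (f : hom C x y),
      comp D (u y) (fmap F f) = comp D (fmap G f) (u x);
  nat_mu : forall x y,
      comp D (u (tens C x y)) (fmu F x y) = comp D (fmu G x y) (tensm D (u x) (u y));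
  nat_eps : comp D (u (tunit C)) (feps F) = feps G;
  nat_iso : forall x, exists v : hom D (fob G x) (fob F x), is_iso D (u x) v
}.
Arguments MonNatIsoLaws {C D F G} u.

Record AntiInv (C : RawSMC) := {
  ai_d : FunData C (op C);
  ai_eta : NatData (idopop C) (fcomp (fop ai_d) ai_d);       (* eta_x : x -> d(d x) in C *)
  ai_eta_inv : forall x : ob C, hom C (fob ai_d (fob ai_d x)) x
}.
Arguments ai_d {C} a.
Arguments ai_eta {C} a x.
Arguments ai_eta_inv {C} a x.

Record AntiInvLaws (C : RawSMC) (A : AntiInv C) : Prop := {
  ai_d_sm : SMFunctorLaws (ai_d A);
  ai_eta_mon : MonNatIsoLaws (ai_eta A);
  ai_eta_inv_iso : forall x, is_iso C (ai_eta A x) (ai_eta_inv A x);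
  ai_invol : forall x,
      comp C (fmap (ai_d A) (ai_eta A x)) (ai_eta A (fob (ai_d A) x))
      = idm C (fob (ai_d A) x)
}.
Arguments AntiInvLaws {C} A.

Definition aiop (C : RawSMC) (A : AntiInv C) : AntiInv (op C) :=
  Build_AntiInv (op C)
    (fop (ai_d A))
    (fun x => ai_eta_inv A x)
    (fun x => ai_eta A x).
Arguments aiop {C} A.

(* phi_x : F(d x) -> d(F x), a morphism of D (as in the paper's coherence
   condition phi_{dx} o F(eta_x) = d(phi_x) o eta_{F x}). *)
Record AIFun (C D : RawSMC) (A : AntiInv C) (B : AntiInv D) := {
  aif_F : FunData C D;
  aif_phi : NatData (fcomp (ai_d B) aif_F) (fcomp (fop aif_F) (ai_d A));
  aif_phi_inv : forall x, hom D (fob (ai_d B) (fob aif_F x)) (fob aif_F (fob (ai_d A) x))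
}.
Arguments AIFun {C D} A B.
Arguments aif_F {C D A B} a.
Arguments aif_phi {C D A B} a x.
Arguments aif_phi_inv {C D A B} a x.

Record AIFunLaws (C D : RawSMC) (A : AntiInv C) (B : AntiInv D) (F : AIFun A B) : Prop := {
  aif_sm : SMFunctorLaws (aif_F F);
  aif_phi_mon : MonNatIsoLaws (aif_phi F);
  aif_phi_inv_iso : forall x, is_iso D (aif_phi F x) (aif_phi_inv F x);
  aif_coh : forall x,
      comp D (aif_phi F (fob (ai_d A) x)) (fmap (aif_F F) (ai_eta A x))
      = comp D (fmap (ai_d B) (aif_phi F x)) (ai_eta B (fob (aif_F F) x))
}.
Arguments AIFunLaws {C D A B} F.

Record AINatLaws (C D : RawSMC) (A : AntiInv C) (B : AntiInv D) (F G : AIFun A B)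
    (u : NatData (aif_F F) (aif_F G)) : Prop := {
  ain_mon : MonNatIsoLaws u;
  ain_coh : forall x,
      aif_phi F x
      = comp D (fmap (ai_d B) (u x)) (comp D (aif_phi G x) (u (fob (ai_d A) x)))
}.
Arguments AINatLaws {C D A B} F G u.

Definition aifcomp (C D E : RawSMC) (A : AntiInv C) (B : AntiInv D) (Bc : AntiInv E)
    (G : AIFun B Bc) (F : AIFun A B) : AIFun A Bc :=
  @Build_AIFun C E A Bc
    (fcomp (aif_F G) (aif_F F))
    (fun x => comp E (aif_phi G (fob (aif_F F) x)) (fmap (aif_F G) (aif_phi F x)))
    (fun x => comp E (fmap (aif_F G) (aif_phi_inv F x)) (aif_phi_inv G (fob (aif_F F) x))).
Arguments aifcomp {C D E A B Bc} G F.

Definition fopAIF (C D : RawSMC) (A : AntiInv C) (B : AntiInv D) (F : AIFun A B)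
    : AIFun (aiop A) (aiop B) :=
  @Build_AIFun (op C) (op D) (aiop A) (aiop B)
    (fop (aif_F F))
    (fun x => aif_phi_inv F x)
    (fun x => aif_phi F x).
Arguments fopAIF {C D A B} F.

Definition is_dual (C : RawSMC) (x xd : ob C)
    (ev : hom C (tens C xd x) (tunit C)) (coev : hom C (tunit C) (tens C x xd)) : Prop :=
  comp C (runit C x) (comp C (tensm C (idm C x) ev)
     (comp C (assoc C x xd x) (comp C (tensm C coev (idm C x)) (lunit_inv C x))))
  = idm C x /\
  comp C (lunit C xd) (comp C (tensm C ev (idm C xd))
     (comp C (assoc_inv C xd x xd) (comp C (tensm C (idm C xd) coev) (runit_inv C xd))))
  = idm C xd.
Arguments is_dual C {x xd} ev coev.

Record Duals (C : RawSMC) := {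
  dob : ob C -> ob C;
  dev : forall x, hom C (tens C (dob x) x) (tunit C);
  dcoev : forall x, hom C (tunit C) (tens C x (dob x))
}.
Arguments dob {C} d x.
Arguments dev {C} d x.
Arguments dcoev {C} d x.

Definition DualsLaws (C : RawSMC) (Dl : Duals C) : Prop :=
  forall x, is_dual C (dev Dl x) (dcoev Dl x).
Arguments DualsLaws {C} Dl.

(* canonical map a -> b between two duals of x (uniqueness of duals):
   a = a(x)I -> a(x)(x(x)b) -> (a(x)x)(x)b -> I(x)b = b *)
Definition dual_iso (C : RawSMC) (x a b : ob C)
    (eva : hom C (tens C a x) (tunit C)) (coevb : hom C (tunit C) (tens C x b)) : hom C a b :=
  comp C (lunit C b) (comp C (tensm C eva (idm C b))
    (comp C (assoc_inv C a x b) (comp C (tensm C (idm C a) coevb) (runit_inv C a)))).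
Arguments dual_iso C {x a b} eva coevb.

Definition dual_mor (C : RawSMC) (Dl : Duals C) (x y : ob C) (f : hom C x y)
    : hom C (dob Dl y) (dob Dl x) :=
  dual_iso C (comp C (dev Dl y) (tensm C (idm C (dob Dl y)) f)) (dcoev Dl x).
Arguments dual_mor {C} Dl {x y} f.

Definition shuffle (C : RawSMC) (a b c d : ob C)
    : hom C (tens C (tens C a b) (tens C c d)) (tens C (tens C a c) (tens C b d)) :=
  comp C (assoc_inv C a c (tens C b d))
   (comp C (tensm C (idm C a) (assoc C c b d))
    (comp C (tensm C (idm C a) (tensm C (braid C b c) (idm C d)))
     (comp C (tensm C (idm C a) (assoc_inv C b c d)) (assoc C a b (tens C c d))))).

Definition ev_par (C : RawSMC) (Dl : Duals C) (x y : ob C)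
    : hom C (tens C (tens C (dob Dl x) (dob Dl y)) (tens C x y)) (tunit C) :=
  comp C (lunit C (tunit C))
    (comp C (tensm C (dev Dl x) (dev Dl y)) (shuffle C (dob Dl x) (dob Dl y) x y)).
Definition coev_par (C : RawSMC) (Dl : Duals C) (x y : ob C)
    : hom C (tunit C) (tens C (tens C x y) (tens C (dob Dl x) (dob Dl y))) :=
  comp C (shuffle C x (dob Dl x) y (dob Dl y))
    (comp C (tensm C (dcoev Dl x) (dcoev Dl y)) (lunit_inv C (tunit C))).
Arguments ev_par {C} Dl x y.
Arguments coev_par {C} Dl x y.

Definition dualF (C : RawSMC) (Dl : Duals C) : FunData C (op C) :=
  Build_FunData C (op C)
    (dob Dl)
    (fun x y (f : hom C x y) => dual_mor Dl f)
    (fun x y => dual_iso C (dev Dl (tens C x y)) (coev_par Dl x y))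
    (fun x y => dual_iso C (ev_par Dl x y) (dcoev Dl (tens C x y)))
    (dual_iso C (dev Dl (tunit C)) (lunit_inv C (tunit C)))
    (dual_iso C (lunit C (tunit C)) (dcoev Dl (tunit C))).
Arguments dualF {C} Dl.

(* d(x^dual) as a dual of d x, transported along the monoidal functor d *)
Definition ev_d (C : RawSMC) (A : AntiInv C) (Dl : Duals C) (x : ob C)
    : hom C (tens C (fob (ai_d A) (dob Dl x)) (fob (ai_d A) x)) (tunit C) :=
  comp C (feps (ai_d A))
    (comp C (fmap (ai_d A) (dcoev Dl x))
      (comp C (fmu_inv (ai_d A) x (dob Dl x))
        (braid C (fob (ai_d A) (dob Dl x)) (fob (ai_d A) x)))).
Definition coev_d (C : RawSMC) (A : AntiInv C) (Dl : Duals C) (x : ob C)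
    : hom C (tunit C) (tens C (fob (ai_d A) x) (fob (ai_d A) (dob Dl x))) :=
  comp C (braid C (fob (ai_d A) (dob Dl x)) (fob (ai_d A) x))
    (comp C (fmu (ai_d A) (dob Dl x) x)
      (comp C (fmap (ai_d A) (dev Dl x)) (feps_inv (ai_d A)))).
Arguments ev_d {C} A Dl x.
Arguments coev_d {C} A Dl x.

(* the dual functor with its canonical anti-involutive structure
   d(x^dual) ~ (d x)^dual (uniqueness of duals) *)
Definition dualAIF (C : RawSMC) (A : AntiInv C) (Dl : Duals C) : AIFun A (aiop A) :=
  @Build_AIFun C (op C) A (aiop A)
    (dualF Dl)
    (fun x => dual_iso C (ev_d A Dl x) (dcoev Dl (fob (ai_d A) x)))
    (fun x => dual_iso C (dev Dl (fob (ai_d A) x)) (coev_d A Dl x)).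
Arguments dualAIF {C} A Dl.

(* zeta_x : F(x^dual) -> F(x)^dual, the unique iso compatible with (co)evaluations,
   where F(x^dual) is a dual of F(x) via the image of the duality data *)
Definition evF (C1 C2 : RawSMC) (D1 : Duals C1) (F : FunData C1 C2) (x : ob C1)
    : hom C2 (tens C2 (fob F (dob D1 x)) (fob F x)) (tunit C2) :=
  comp C2 (feps_inv F) (comp C2 (fmap F (dev D1 x)) (fmu F (dob D1 x) x)).
Arguments evF {C1 C2} D1 F x.

Definition zeta (C1 C2 : RawSMC) (D1 : Duals C1) (D2 : Duals C2) (F : FunData C1 C2)
    : NatData (fcomp (dualF D2) F) (fcomp (fop F) (dualF D1)) :=
  fun x => dual_iso C2 (evF D1 F x) (dcoev D2 (fob F x)).
Arguments zeta {C1 C2} D1 D2 F.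

(* Both F(x^∨), with evaluation F(ev_x), and the chosen F(x)^∨ are duals of
   F(x), and ζ_x is the comparison map between them.  A morphism into a dual is
   determined by its composite with the evaluation, so each defining property of
   a monoidal anti-involutive natural isomorphism is checked by tensoring with
   the appropriate object and evaluating.  Both sides then reduce to F applied to
   an evaluation in C1: F is strong symmetric monoidal, so it carries duals to
   duals and respects the duality between x^∨ ⊗ y^∨ and x ⊗ y (built from the
   braiding), and the structure map φ of F is a monoidal natural isomorphism. *)

From Corelib Require Import ssreflect.

Existing Class SMCLaws.
Existing Class SMFunctorLaws.
Existing Class AntiInvLaws.
Existing Class AIFunLaws.

#[export] Instance ai_d_laws {C} {A : AntiInv C} {HA : AntiInvLaws A} :
  SMFunctorLaws (ai_d A) := ai_d_sm _ _ HA.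
#[export] Instance aif_F_laws {C D} {A : AntiInv C} {B : AntiInv D} {F : AIFun A B}
  {HF : AIFunLaws F} : SMFunctorLaws (aif_F F) := aif_sm _ _ _ _ _ HF.

Notation "g ∘ f" := (comp _ g f) (at level 40, left associativity).
Notation "f ⊗ g" := (tensm _ f g) (at level 35).
Notation "1_ x" := (idm _ x) (at level 9, x at level 9).
Notation tns := (tens _).
Notation α := (assoc _).
Notation α' := (assoc_inv _).
Notation λ := (lunit _).
Notation λ' := (lunit_inv _).
Notation ρ := (runit _).
Notation ρ' := (runit_inv _).
Notation β := (braid _).

Section Composition.
Context {C : RawSMC} {HC : SMCLaws C}.

Lemma compA w x y z (h : hom C y z) (g : hom C x y) (f : hom C w x) :
  h ∘ (g ∘ f) = h ∘ g ∘ f.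
Proof. exact: comp_assoc. Qed.

Lemma comp_tail2 {w x y z} {g : hom C y z} {f : hom C x y} {k : hom C x z}
  (e : g ∘ f = k) (h : hom C w x) : g ∘ (f ∘ h) = k ∘ h.
Proof. by rewrite compA e. Qed.

Lemma comp_tail3 {w x y z} {g : hom C y z} {f : hom C x y} {d : hom C w x}
  {k : hom C w z} (e : g ∘ (f ∘ d) = k) u (h : hom C u w) :
  g ∘ (f ∘ (d ∘ h)) = k ∘ h.
Proof. by rewrite -e !compA. Qed.

Lemma comp_tail4 {v w x y z t} {g : hom C y z} {f : hom C x y} {d : hom C w x}
  {c : hom C v w} {k : hom C v z} (e : g ∘ (f ∘ (d ∘ c)) = k) (h : hom C t v) :
  g ∘ (f ∘ (d ∘ (c ∘ h))) = k ∘ h.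
Proof. by rewrite -e !compA. Qed.

Lemma comp_tail5 {u v w x y z t} {g : hom C y z} {f : hom C x y} {d : hom C w x}
  {c : hom C v w} {b : hom C u v} {k : hom C u z}
  (e : g ∘ (f ∘ (d ∘ (c ∘ b))) = k) (h : hom C t u) :
  g ∘ (f ∘ (d ∘ (c ∘ (b ∘ h)))) = k ∘ h.
Proof. by rewrite -e !compA. Qed.

End Composition.

(* Composites are kept right-associated.  [rw e] saturates [e] with holes and
   rewrites it at any position of such a chain, not only at its head (this is
   what the [comp_tail] lemmas are for); implicit arguments that cannot be
   inferred before matching are left to the rewrite.  [rwb e] rewrites from
   right to left. *)
Ltac right_assoc := repeat rewrite <- compA.

Ltac count_foralls T :=
  lazymatch T with
  | forall x : ?A, @?B x =>
      let body := constr:(fun x : A =>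
        ltac:(let b := eval cbv beta in (B x) in let m := count_foralls b in exact m)) in
      lazymatch body with fun _ => ?m => constr:(S m) end
  | _ => constr:(O)
  end.
Ltac apply_holes e n := lazymatch n with
  | O => e
  | S ?m => apply_holes uconstr:(e _) m end.

Ltac rewrite_in_chain u :=
  first [ rewrite (comp_tail2 u) | rewrite (comp_tail3 u) | rewrite (comp_tail4 u)
        | rewrite (comp_tail5 u) | rewrite u ];
  right_assoc.

Ltac rw_with t e sym :=
  let T := type of t in let n := count_foralls T in let u := apply_holes e n in
  lazymatch sym with
  | false => rewrite_in_chain u
  | true => rewrite_in_chain uconstr:(eq_sym u)
  end.
Ltac rw_dir e sym :=
  first [ let t := constr:(e) in rw_with t e sym
        | let t := open_constr:(e) in rw_with t t sym ].

Tactic Notation "rw" uconstr(e) := rw_dir e false.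
Tactic Notation "rwb" uconstr(e) := rw_dir e true.

Section MonoidalCategory.
Context {C : RawSMC} {HC : SMCLaws C}.
Notation I := (tunit C).
Implicit Types (w x y z : ob C).

Lemma comp1f x y (f : hom C x y) : 1_ y ∘ f = f.
Proof. exact: comp_idl. Qed.
Lemma compf1 x y (f : hom C x y) : f ∘ 1_ x = f.
Proof. exact: comp_idr. Qed.
Lemma tensm11 x y : 1_ x ⊗ 1_ y = 1_ (tns x y).
Proof. exact: tensm_id. Qed.
Lemma comp_tensm x x' x'' y y' y'' (f : hom C x x') (f' : hom C x' x'')
  (g : hom C y y') (g' : hom C y' y'') :
  (f' ⊗ g') ∘ (f ⊗ g) = (f' ∘ f) ⊗ (g' ∘ g).
Proof. by rewrite tensm_comp. Qed.

Lemma tensm_split x x' y y' (f : hom C x x') (g : hom C y y') :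
  f ⊗ g = (f ⊗ 1_ y') ∘ (1_ x ⊗ g).
Proof. by rewrite comp_tensm comp1f compf1. Qed.
Lemma tensm_split' x x' y y' (f : hom C x x') (g : hom C y y') :
  f ⊗ g = (1_ x' ⊗ g) ∘ (f ⊗ 1_ y).
Proof. by rewrite comp_tensm comp1f compf1. Qed.
Lemma interchange x x' y y' (f : hom C x x') (g : hom C y y') :
  (f ⊗ 1_ y') ∘ (1_ x ⊗ g) = (1_ x' ⊗ g) ∘ (f ⊗ 1_ y).
Proof. by rewrite -tensm_split -tensm_split'. Qed.
Lemma comp_whiskerl x y z (f : hom C y z) (g : hom C x y) w :
  (1_ w ⊗ f) ∘ (1_ w ⊗ g) = 1_ w ⊗ (f ∘ g).
Proof. by rewrite comp_tensm comp1f. Qed.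
Lemma comp_whiskerr x y z (f : hom C y z) (g : hom C x y) w :
  (f ⊗ 1_ w) ∘ (g ⊗ 1_ w) = (f ∘ g) ⊗ 1_ w.
Proof. by rewrite comp_tensm comp1f. Qed.

Lemma assoc_assoc_inv x y z : α x y z ∘ α' x y z = 1_ _.
Proof. by case: (assoc_iso C HC x y z). Qed.
Lemma assoc_inv_assoc x y z : α' x y z ∘ α x y z = 1_ _.
Proof. by case: (assoc_iso C HC x y z). Qed.
Lemma lunit_lunit_inv x : λ x ∘ λ' x = 1_ _.
Proof. by case: (lunit_iso C HC x). Qed.
Lemma lunit_inv_lunit x : λ' x ∘ λ x = 1_ _.
Proof. by case: (lunit_iso C HC x). Qed.
Lemma runit_runit_inv x : ρ x ∘ ρ' x = 1_ _.
Proof. by case: (runit_iso C HC x). Qed.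
Lemma runit_inv_runit x : ρ' x ∘ ρ x = 1_ _.
Proof. by case: (runit_iso C HC x). Qed.
Lemma braid_braid x y : β y x ∘ β x y = 1_ _.
Proof. exact: braid_invol. Qed.

Lemma retraction_mono x y (f : hom C x y) (g : hom C y x) z (u v : hom C z x) :
  g ∘ f = 1_ x -> f ∘ u = f ∘ v -> u = v.
Proof. by move=> gf fuv; rewrite -(comp1f _ _ u) -(comp1f _ _ v) -gf -!compA fuv. Qed.
Lemma section_epi x y (f : hom C x y) (g : hom C y x) z (u v : hom C y z) :
  f ∘ g = 1_ y -> u ∘ f = v ∘ f -> u = v.
Proof. by move=> fg ufv; rewrite -(compf1 _ _ u) -(compf1 _ _ v) -fg !compA ufv. Qed.

Lemma assoc_natural x x' y y' z z' (f : hom C x x') (g : hom C y y') (h : hom C z z') :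
  α x' y' z' ∘ ((f ⊗ g) ⊗ h) = (f ⊗ (g ⊗ h)) ∘ α x y z.
Proof. exact: assoc_nat. Qed.
Lemma assoc_natural_l x x' y z (f : hom C x x') :
  α x' y z ∘ ((f ⊗ 1_ y) ⊗ 1_ z) = (f ⊗ 1_ (tns y z)) ∘ α x y z.
Proof. by rewrite assoc_natural tensm11. Qed.
Lemma assoc_natural_m x y y' z (g : hom C y y') :
  α x y' z ∘ ((1_ x ⊗ g) ⊗ 1_ z) = (1_ x ⊗ (g ⊗ 1_ z)) ∘ α x y z.
Proof. exact: assoc_natural. Qed.
Lemma assoc_natural_r x y z z' (h : hom C z z') :
  α x y z' ∘ (1_ (tns x y) ⊗ h) = (1_ x ⊗ (1_ y ⊗ h)) ∘ α x y z.
Proof. by rewrite -tensm11 assoc_natural. Qed.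
Lemma assoc_inv_natural x x' y y' z z' (f : hom C x x') (g : hom C y y') (h : hom C z z') :
  α' x' y' z' ∘ (f ⊗ (g ⊗ h)) = ((f ⊗ g) ⊗ h) ∘ α' x y z.
Proof.
  apply: (retraction_mono _ _ (α x' y' z') (α' x' y' z')); first exact: assoc_inv_assoc.
  by rewrite !compA assoc_assoc_inv comp1f assoc_natural -compA assoc_assoc_inv compf1.
Qed.
Lemma assoc_inv_natural_l x x' y z (f : hom C x x') :
  α' x' y z ∘ (f ⊗ 1_ (tns y z)) = ((f ⊗ 1_ y) ⊗ 1_ z) ∘ α' x y z.
Proof. by rewrite -tensm11 assoc_inv_natural. Qed.
Lemma assoc_inv_natural_m x y y' z (g : hom C y y') :
  α' x y' z ∘ (1_ x ⊗ (g ⊗ 1_ z)) = ((1_ x ⊗ g) ⊗ 1_ z) ∘ α' x y z.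
Proof. exact: assoc_inv_natural. Qed.
Lemma assoc_inv_natural_r x y z z' (h : hom C z z') :
  α' x y z' ∘ (1_ x ⊗ (1_ y ⊗ h)) = (1_ (tns x y) ⊗ h) ∘ α' x y z.
Proof. by rewrite assoc_inv_natural tensm11. Qed.
Lemma lunit_natural x y (f : hom C x y) : λ y ∘ (1_ I ⊗ f) = f ∘ λ x.
Proof. exact: lunit_nat. Qed.
Lemma runit_natural x y (f : hom C x y) : ρ y ∘ (f ⊗ 1_ I) = f ∘ ρ x.
Proof. exact: runit_nat. Qed.
Lemma lunit_inv_natural x y (f : hom C x y) : λ' y ∘ f = (1_ I ⊗ f) ∘ λ' x.
Proof.
  apply: (retraction_mono _ _ (λ y) (λ' y)); first exact: lunit_inv_lunit.
  by rewrite !compA lunit_lunit_inv comp1f lunit_natural -compA lunit_lunit_inv compf1.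
Qed.
Lemma runit_inv_natural x y (f : hom C x y) : ρ' y ∘ f = (f ⊗ 1_ I) ∘ ρ' x.
Proof.
  apply: (retraction_mono _ _ (ρ y) (ρ' y)); first exact: runit_inv_runit.
  by rewrite !compA runit_runit_inv comp1f runit_natural -compA runit_runit_inv compf1.
Qed.
Lemma braid_natural x x' y y' (f : hom C x x') (g : hom C y y') :
  β x' y' ∘ (f ⊗ g) = (g ⊗ f) ∘ β x y.
Proof. exact: braid_nat. Qed.
Lemma braid_natural_l x x' y (f : hom C x x') : β x' y ∘ (f ⊗ 1_ y) = (1_ y ⊗ f) ∘ β x y.
Proof. exact: braid_natural. Qed.
Lemma braid_natural_r x y y' (g : hom C y y') : β x y' ∘ (1_ x ⊗ g) = (g ⊗ 1_ x) ∘ β x y.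
Proof. exact: braid_natural. Qed.

Lemma pentagonE w x y z :
  α w x (tns y z) ∘ α (tns w x) y z
  = (1_ w ⊗ α x y z) ∘ (α w (tns x y) z ∘ (α w x y ⊗ 1_ z)).
Proof. exact: pentagon. Qed.
Lemma triangleE x y : (1_ x ⊗ λ y) ∘ α x I y = ρ x ⊗ 1_ y.
Proof. exact: triangle. Qed.
Lemma hexagonE x y z :
  α y z x ∘ (β x (tns y z) ∘ α x y z)
  = (1_ y ⊗ β x z) ∘ (α y x z ∘ (β x y ⊗ 1_ z)).
Proof. exact: hexagon. Qed.

End MonoidalCategory.

Ltac cancel_isos :=
  repeat first [ rw assoc_assoc_inv | rw assoc_inv_assoc | rw lunit_lunit_inv
               | rw lunit_inv_lunit | rw runit_runit_inv | rw runit_inv_runit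
               | rw braid_braid | rw tensm11 | rw comp1f | rw compf1 ].

Ltac split_whiskers_l := repeat rewrite <- comp_whiskerl.
Ltac split_whiskers_r := repeat rewrite <- comp_whiskerr.
Ltac split_whiskers := split_whiskers_l; split_whiskers_r.

Section Coherence.
Context {C : RawSMC} {HC : SMCLaws C}.
Notation I := (tunit C).
Implicit Types (w x y z : ob C).

Lemma whiskerl_unit_inj x y (f g : hom C x y) : 1_ I ⊗ f = 1_ I ⊗ g -> f = g.
Proof.
  move=> fg; apply: (section_epi _ _ (λ x) (λ' x)); first exact: lunit_lunit_inv.
  by rewrite -!lunit_natural fg.
Qed.
Lemma whiskerr_unit_inj x y (f g : hom C x y) : f ⊗ 1_ I = g ⊗ 1_ I -> f = g.
Proof.
  move=> fg; apply: (section_epi _ _ (ρ x) (ρ' x)); first exact: runit_runit_inv.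
  by rewrite -!runit_natural fg.
Qed.

Lemma lunit_tens x y : λ (tns x y) ∘ α I x y = λ x ⊗ 1_ y.
Proof.
  apply: whiskerl_unit_inj.
  apply: (section_epi _ _ (α I (tns I x) y ∘ (α I I x ⊗ 1_ y))
                         ((α' I I x ⊗ 1_ y) ∘ α' I (tns I x) y)).
    right_assoc. rw comp_whiskerr. by cancel_isos.
  rewrite -comp_whiskerl. right_assoc. rwb pentagonE. rw triangleE.
  rwb assoc_natural_m. rw comp_whiskerr. rw triangleE. by rw assoc_natural_l.
Qed.

Lemma runit_tens x y : (1_ x ⊗ ρ y) ∘ α x y I = ρ (tns x y).
Proof.
  apply: whiskerr_unit_inj.
  apply: (retraction_mono _ _ (α x y I) (α' x y I)); first exact: assoc_inv_assoc.
  rewrite -comp_whiskerr. right_assoc. rw assoc_natural_m.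
  rewrite -(triangleE (tns x y) I). rw assoc_natural_r. rw pentagonE.
  rw comp_whiskerl. by rw triangleE.
Qed.

Lemma lunit_unit : λ I = ρ I.
Proof.
  have lunit_unit_tens : λ (tns I I) = 1_ I ⊗ λ I.
    apply: (retraction_mono _ _ (λ I) (λ' I)); first exact: lunit_inv_lunit.
    by rewrite lunit_natural.
  by apply: whiskerr_unit_inj; rewrite -lunit_tens -triangleE lunit_unit_tens.
Qed.

Lemma lunit_inv_unit : λ' I = ρ' I.
Proof.
  apply: (retraction_mono _ _ (λ I) (λ' I)); first exact: lunit_inv_lunit.
  by rewrite lunit_lunit_inv lunit_unit runit_runit_inv.
Qed.

Lemma lunit_tens' x y : λ (tns x y) = (λ x ⊗ 1_ y) ∘ α' I x y.
Proof. rewrite -lunit_tens. right_assoc. by cancel_isos. Qed.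

Lemma runit_tens' x y : ρ (tns x y) ∘ α' x y I = 1_ x ⊗ ρ y.
Proof. rewrite -runit_tens. right_assoc. by cancel_isos. Qed.

Lemma lunit_tens_inv x y : α' I x y ∘ λ' (tns x y) = λ' x ⊗ 1_ y.
Proof.
  apply: (retraction_mono _ _ (λ x ⊗ 1_ y) (λ' x ⊗ 1_ y)).
    by rewrite comp_whiskerr lunit_inv_lunit tensm11.
  rewrite comp_whiskerr lunit_lunit_inv tensm11 -lunit_tens. right_assoc. by cancel_isos.
Qed.

Lemma lunit_inv_tens x y : α I x y ∘ (λ' x ⊗ 1_ y) = λ' (tns x y).
Proof. rewrite -lunit_tens_inv. right_assoc. by cancel_isos. Qed.

Lemma runit_tens_inv x y : α x y I ∘ ρ' (tns x y) = 1_ x ⊗ ρ' y.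
Proof.
  apply: (retraction_mono _ _ (1_ x ⊗ ρ y) (1_ x ⊗ ρ' y)).
    by rewrite comp_whiskerl runit_inv_runit tensm11.
  right_assoc. rw runit_tens. by rewrite runit_runit_inv comp_whiskerl runit_runit_inv tensm11.
Qed.

Lemma triangle_inv x y : α x I y ∘ (ρ' x ⊗ 1_ y) = 1_ x ⊗ λ' y.
Proof.
  apply: (retraction_mono _ _ (1_ x ⊗ λ y) (1_ x ⊗ λ' y)).
    by rewrite comp_whiskerl lunit_inv_lunit tensm11.
  right_assoc. rw triangleE. rw comp_whiskerr.
  by rewrite runit_runit_inv comp_whiskerl lunit_lunit_inv !tensm11.
Qed.
Lemma triangle_inv' x y : α' x I y ∘ (1_ x ⊗ λ' y) = ρ' x ⊗ 1_ y.
Proof. rewrite -triangle_inv. right_assoc. by cancel_isos. Qed.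

Lemma pentagon_whiskerl_inv w x y z :
  (1_ w ⊗ α' x y z) ∘ α w x (tns y z)
  = α w (tns x y) z ∘ ((α w x y ⊗ 1_ z) ∘ α' (tns w x) y z).
Proof.
  apply: (section_epi _ _ (α (tns w x) y z) (α' (tns w x) y z)); first exact: assoc_assoc_inv.
  right_assoc. rw pentagonE. rw comp_whiskerl. by cancel_isos.
Qed.

Lemma pentagon_inv w x y z :
  α' (tns w x) y z ∘ (α' w x (tns y z) ∘ (1_ w ⊗ α x y z))
  = (α' w x y ⊗ 1_ z) ∘ α' w (tns x y) z.
Proof.
  apply: (retraction_mono _ _ (α (tns w x) y z) (α' (tns w x) y z)); first exact: assoc_inv_assoc.
  apply: (retraction_mono _ _ (α w x (tns y z)) (α' w x (tns y z))); first exact: assoc_inv_assoc.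
  right_assoc. cancel_isos. rw pentagonE. rw comp_whiskerr. by cancel_isos.
Qed.

Lemma pentagon_assoc_inv_l w x y z :
  (α' w x y ⊗ 1_ z) ∘ (α' w (tns x y) z ∘ ((1_ w ⊗ α' x y z) ∘ α w x (tns y z)))
  = α' (tns w x) y z.
Proof.
  rw pentagon_whiskerl_inv. cancel_isos. rw comp_whiskerr. by cancel_isos.
Qed.

Lemma pentagon_assoc_inv_r w x y z :
  α (tns w x) y z ∘ ((α' w x y ⊗ 1_ z) ∘ (α' w (tns x y) z ∘ (1_ w ⊗ α' x y z)))
  = α' w x (tns y z).
Proof.
  apply: (retraction_mono _ _ (α w x (tns y z)) (α' w x (tns y z))); first exact: assoc_inv_assoc.
  right_assoc. rw pentagonE. rw comp_whiskerr. cancel_isos.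
  rw comp_whiskerl. by cancel_isos.
Qed.

Lemma braid_tens_r x y z :
  β x (tns y z)
  = α' y z x ∘ ((1_ y ⊗ β x z) ∘ (α y x z ∘ ((β x y ⊗ 1_ z) ∘ α' x y z))).
Proof.
  apply: (retraction_mono _ _ (α y z x) (α' y z x)); first exact: assoc_inv_assoc.
  apply: (section_epi _ _ (α x y z) (α' x y z)); first exact: assoc_assoc_inv.
  right_assoc. cancel_isos. by rw hexagonE.
Qed.

Lemma hexagon_assoc_inv x y z :
  α y x z ∘ ((β x y ⊗ 1_ z) ∘ α' x y z)
  = (1_ y ⊗ β z x) ∘ (α y z x ∘ β x (tns y z)).
Proof. rewrite braid_tens_r. right_assoc. cancel_isos. rw comp_whiskerl. by cancel_isos. Qed.

Lemma hexagon_braid_inv x y z :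
  β y (tns x z) ∘ (α y x z ∘ ((β x y ⊗ 1_ z) ∘ α' x y z))
  = α' x z y ∘ (1_ x ⊗ β y z).
Proof. rewrite braid_tens_r. right_assoc. cancel_isos. rw comp_whiskerr. by cancel_isos. Qed.

Lemma lunit_braid x : λ x ∘ β x I = ρ x.
Proof.
  apply: whiskerr_unit_inj.
  apply: (retraction_mono _ _ (β x I) (β I x)); first exact: braid_braid.
  symmetry; rewrite -triangleE. right_assoc. rw braid_natural_r. rewrite -lunit_tens. right_assoc.
  rw hexagonE. rw lunit_natural. rw lunit_tens. by rw comp_whiskerr.
Qed.

Lemma braid_runit_inv x : β x I ∘ ρ' x = λ' x.
Proof.
  apply: (retraction_mono _ _ (λ x) (λ' x)); first exact: lunit_inv_lunit.
  right_assoc. rw lunit_braid. by rewrite runit_runit_inv lunit_lunit_inv.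
Qed.

End Coherence.

Section Duality.
Context {C : RawSMC} {HC : SMCLaws C}.
Notation I := (tunit C).
Implicit Types (a b c d n m x y z : ob C).

Lemma dual_iso_ev x b (evb : hom C (tns b x) I) (coevb : hom C I (tns x b)) :
  is_dual C evb coevb -> forall a (g : hom C (tns a x) I),
  evb ∘ (dual_iso C g coevb ⊗ 1_ x) = g.
Proof.
  move=> [zigzag _] a g. rewrite /dual_iso. split_whiskers_r. right_assoc.
  rewrite -lunit_tens. right_assoc. rwb lunit_natural. rw assoc_natural_l. rwb interchange.
  rewrite lunit_unit. rw runit_natural. rewrite -runit_tens. right_assoc.
  rw assoc_natural_r. rw pentagonE. rw comp_whiskerr. cancel_isos.
  rw assoc_natural_m. rw triangle_inv. do 4 rw comp_whiskerl.
  by rewrite zigzag; cancel_isos.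
Qed.

Lemma dual_isoK x b (evb : hom C (tns b x) I) (coevb : hom C I (tns x b)) :
  is_dual C evb coevb -> forall a (h : hom C a b),
  dual_iso C (evb ∘ (h ⊗ 1_ x)) coevb = h.
Proof.
  move=> [_ zigzag] a h. rewrite /dual_iso. split_whiskers_r. right_assoc.
  rwb assoc_inv_natural_l. rw interchange. rwb runit_inv_natural.
  by rewrite !compA in zigzag; rewrite !compA zigzag comp1f.
Qed.

Lemma dual_ev_inj x b (evb : hom C (tns b x) I) (coevb : hom C I (tns x b)) :
  is_dual C evb coevb -> forall a (h k : hom C a b),
  evb ∘ (h ⊗ 1_ x) = evb ∘ (k ⊗ 1_ x) -> h = k.
Proof.
  move=> dual a h k hk.
  by rewrite -(dual_isoK _ _ _ _ dual _ h) -(dual_isoK _ _ _ _ dual _ k) hk.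
Qed.

Lemma dual_iso_coev x a b (eva : hom C (tns a x) I) (coeva : hom C I (tns x a))
  (coevb : hom C I (tns x b)) :
  is_dual C eva coeva -> (1_ x ⊗ dual_iso C eva coevb) ∘ coeva = coevb.
Proof.
  move=> [zigzag _]. rewrite /dual_iso. split_whiskers_l. right_assoc.
  rewrite -runit_tens_inv. right_assoc. rw runit_inv_natural. rwb assoc_natural_r.
  rwb interchange. rewrite -lunit_inv_unit. rwb lunit_inv_natural.
  rw pentagon_whiskerl_inv. rwb assoc_natural_m. rw triangleE. rw assoc_inv_natural_l.
  rw lunit_tens_inv. do 4 rw comp_whiskerr.
  by rewrite zigzag; cancel_isos.
Qed.

Lemma unit_is_dual : is_dual C (λ I) (λ' I).
Proof.
  split.
  - rw triangleE. rw comp_whiskerr. by rewrite lunit_inv_unit; cancel_isos.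
  - rw triangle_inv'. rw comp_whiskerr. by rewrite -lunit_inv_unit; cancel_isos.
Qed.

(* Unit and counit of the adjunction (a ⊗ -) ⊣ (x ⊗ -) induced by a duality. *)
Definition dual_unit x a (coev : hom C I (tns x a)) n : hom C n (tns x (tns a n)) :=
  α x a n ∘ ((coev ⊗ 1_ n) ∘ λ' n).
Definition dual_counit x a (ev : hom C (tns a x) I) n : hom C (tns a (tns x n)) n :=
  λ n ∘ ((ev ⊗ 1_ n) ∘ α' a x n).

Lemma dual_unitE x a coev n :
  (coev ⊗ 1_ n) ∘ λ' n = α' x a n ∘ dual_unit x a coev n.
Proof. rewrite /dual_unit. right_assoc. by cancel_isos. Qed.

Lemma dual_counitE x a ev n :
  λ n ∘ (ev ⊗ 1_ n) = dual_counit x a ev n ∘ α a x n.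
Proof. rewrite /dual_counit. right_assoc. by cancel_isos. Qed.

Lemma dual_unit_natural x a coev n n' (f : hom C n n') :
  dual_unit x a coev n' ∘ f = (1_ x ⊗ (1_ a ⊗ f)) ∘ dual_unit x a coev n.
Proof.
  rewrite /dual_unit. right_assoc.
  rw lunit_inv_natural. rw interchange. by rw assoc_natural_r.
Qed.

Lemma dual_counit_natural x a ev n n' (f : hom C n n') :
  dual_counit x a ev n' ∘ (1_ a ⊗ (1_ x ⊗ f)) = f ∘ dual_counit x a ev n.
Proof.
  rewrite /dual_counit. right_assoc.
  rw assoc_inv_natural_r. rw interchange. by rw lunit_natural.
Qed.

Lemma dual_unit_tens x a coev n m :
  dual_unit x a coev (tns n m)
  = (1_ x ⊗ α a n m) ∘ (α x (tns a n) m ∘ (dual_unit x a coev n ⊗ 1_ m)).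
Proof.
  rewrite /dual_unit. split_whiskers_r. right_assoc.
  rwb pentagonE. rw assoc_natural_l. by rw lunit_inv_tens.
Qed.

Lemma dual_unit_tens' x a coev n m :
  dual_unit x a coev n ⊗ 1_ m
  = α' x (tns a n) m ∘ ((1_ x ⊗ α' a n m) ∘ dual_unit x a coev (tns n m)).
Proof. rewrite dual_unit_tens. right_assoc. rw comp_whiskerl. by cancel_isos. Qed.

Lemma dual_counit_tens x a ev n m :
  dual_counit x a ev n ⊗ 1_ m
  = dual_counit x a ev (tns n m) ∘ ((1_ a ⊗ α x n m) ∘ α a (tns x n) m).
Proof.
  rewrite /dual_counit. split_whiskers_r. right_assoc.
  rewrite -lunit_tens. right_assoc. rw assoc_natural_l.
  do 2 apply: f_equal.
  apply: (retraction_mono _ _ (α a x (tns n m)) (α' a x (tns n m))); first exact: assoc_inv_assoc.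
  right_assoc. cancel_isos. rw pentagonE. rw comp_whiskerr. by cancel_isos.
Qed.

Lemma dual_triangle_l x a ev coev : is_dual C ev coev -> forall n,
  (1_ x ⊗ dual_counit x a ev n) ∘ dual_unit x a coev (tns x n) = 1_ _.
Proof.
  move=> [zigzag _] n. rewrite dual_unit_tens /dual_counit. split_whiskers_l. right_assoc.
  rw (comp_whiskerl _ _ _ (α' a x n) (α a x n) x). cancel_isos.
  rwb assoc_natural_m. rw triangleE. rewrite /dual_unit. do 2 rw comp_whiskerr.
  by rewrite zigzag; cancel_isos.
Qed.

Lemma dual_triangle_r x a ev coev : is_dual C ev coev -> forall n,
  dual_counit x a ev (tns a n) ∘ (1_ a ⊗ dual_unit x a coev n) = 1_ _.
Proof.
  move=> [_ zigzag] n.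
  have -> : dual_counit x a ev (tns a n)
          = (dual_counit x a ev a ⊗ 1_ n) ∘ (α' a (tns x a) n ∘ (1_ a ⊗ α' x a n)).
    rewrite dual_counit_tens. right_assoc. cancel_isos. rw comp_whiskerl. by cancel_isos.
  rewrite /dual_unit. split_whiskers_l. right_assoc. rw comp_whiskerl. cancel_isos.
  rw assoc_inv_natural_m. rw triangle_inv'. rewrite /dual_counit.
  do 2 rw comp_whiskerr. by rewrite zigzag; cancel_isos.
Qed.

Lemma comp_whiskerl2 x y z (f : hom C y z) (g : hom C x y) w v :
  (1_ w ⊗ (1_ v ⊗ f)) ∘ (1_ w ⊗ (1_ v ⊗ g)) = 1_ w ⊗ (1_ v ⊗ (f ∘ g)).
Proof. by rewrite !comp_whiskerl. Qed.

Section NestedDual.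
Variables (x y a b : ob C) (eva : hom C (tns a x) I) (coeva : hom C I (tns x a))
  (evb : hom C (tns b y) I) (coevb : hom C I (tns y b)).
Hypotheses (dual_a : is_dual C eva coeva) (dual_b : is_dual C evb coevb).

Definition ev_nested : hom C (tns (tns b a) (tns x y)) I :=
  evb ∘ ((1_ b ⊗ dual_counit x a eva y) ∘ α b a (tns x y)).
Definition coev_nested : hom C I (tns (tns x y) (tns b a)) :=
  α' x y (tns b a) ∘ ((1_ x ⊗ dual_unit y b coevb a) ∘ coeva).

Lemma is_dual_nested : is_dual C ev_nested coev_nested.
Proof.
  rewrite /ev_nested /coev_nested. split; split_whiskers; right_assoc.
  - rw dual_unitE. rwb assoc_inv_natural_m. rw dual_unit_tens'. split_whiskers_l. right_assoc.
    rw pentagon_assoc_inv_r. rwb assoc_inv_natural_r.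
    rw (comp_whiskerl2 _ _ _ (α b a (tns x y)) (α' b a (tns x y)) x y). cancel_isos.
    rwb assoc_inv_natural_r. rw comp_whiskerl. rwb dual_unit_natural.
    rewrite -comp_whiskerl. right_assoc.
    rw (dual_triangle_l _ _ _ _ dual_a). cancel_isos. rwb assoc_inv_natural_r.
    rw runit_tens'. do 2 rw comp_whiskerl.
    case: dual_b => zigzag _. rewrite /dual_unit zigzag. by cancel_isos.
  - rw dual_counitE. rw assoc_natural_m. rewrite dual_counit_tens. split_whiskers_l. right_assoc.
    rwb pentagonE. cancel_isos. rwb assoc_natural_r.
    rw comp_whiskerl. cancel_isos. rw assoc_natural_r. rw comp_whiskerl.
    rw dual_counit_natural. rewrite -comp_whiskerl. right_assoc.
    rw (dual_triangle_r _ _ _ _ dual_b). cancel_isos. rw assoc_natural_r.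
    rw runit_tens_inv. do 2 rw comp_whiskerl.
    case: dual_a => _ zigzag. rewrite /dual_counit. right_assoc. rewrite zigzag. by cancel_isos.
Qed.

End NestedDual.

Lemma is_dual_transport x b b' (ev : hom C (tns b x) I) (coev : hom C I (tns x b))
  (s : hom C b' b) (s' : hom C b b') :
  is_dual C ev coev -> s ∘ s' = 1_ b -> s' ∘ s = 1_ b' ->
  is_dual C (ev ∘ (s ⊗ 1_ x)) ((1_ x ⊗ s') ∘ coev).
Proof.
  move=> [zigzag_l zigzag_r] ss' s's.
  split; split_whiskers; right_assoc.
  - rw assoc_natural_m. rw (comp_whiskerl _ _ _ (s ⊗ 1_ x) (s' ⊗ 1_ x) x).
    rw comp_whiskerr. rw ss'. by cancel_isos.
  - rwb assoc_inv_natural_l. rw interchange. rw assoc_inv_natural_r. rw interchange.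
    rw lunit_natural. rw interchange. rwb runit_inv_natural. rw zigzag_r. by cancel_isos.
Qed.

Lemma hexagon_coev y a b (coevb : hom C I (tns y b)) :
  α y a b ∘ ((β a y ⊗ 1_ b) ∘ (α' a y b ∘ ((1_ a ⊗ coevb) ∘ ρ' a)))
  = (1_ y ⊗ β b a) ∘ dual_unit y b coevb a.
Proof.
  rw hexagon_assoc_inv. rw braid_natural_r. rw braid_runit_inv.
  by rewrite /dual_unit.
Qed.

Lemma hexagon_ev x a b (eva : hom C (tns a x) I) :
  λ b ∘ ((eva ⊗ 1_ b) ∘ (α' a x b ∘ (1_ a ⊗ β b x)))
  = ρ b ∘ ((1_ b ⊗ eva) ∘ (α b a x ∘ ((β a b ⊗ 1_ x) ∘ α' a b x))).
Proof. rewrite -lunit_braid. right_assoc. rw braid_natural_r. by rw hexagon_braid_inv. Qed.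

Lemma coev_shuffle x y a b (coeva : hom C I (tns x a)) (coevb : hom C I (tns y b)) :
  shuffle C x a y b ∘ ((coeva ⊗ coevb) ∘ λ' I)
  = (1_ (tns x y) ⊗ β b a) ∘ coev_nested x y a b coeva coevb.
Proof.
  rewrite /shuffle /coev_nested (tensm_split' _ _ _ _ coeva coevb). right_assoc.
  rw assoc_natural_r. rewrite lunit_inv_unit. rwb runit_inv_natural. rw runit_tens_inv.
  rwb assoc_inv_natural_r. repeat rw comp_whiskerl. by rewrite -hexagon_coev.
Qed.

Lemma ev_shuffle x y a b (eva : hom C (tns a x) I) (evb : hom C (tns b y) I) :
  λ I ∘ ((eva ⊗ evb) ∘ shuffle C a b x y)
  = ev_nested x y a b eva evb ∘ (β a b ⊗ 1_ (tns x y)).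
Proof.
  rewrite /shuffle /ev_nested (tensm_split' _ _ _ _ eva evb). right_assoc.
  rw lunit_natural. rewrite lunit_tens'. right_assoc.
  rw assoc_inv_natural_l. rw pentagon_inv. rw assoc_inv_natural_m. do 3 rw comp_whiskerr.
  rewrite hexagon_ev. split_whiskers_r. right_assoc.
  rw pentagon_assoc_inv_l. rwb assoc_inv_natural_l. rewrite -triangleE. right_assoc.
  rw assoc_natural_m. rwb pentagon_whiskerl_inv.
  by rewrite /dual_counit; split_whiskers_l; right_assoc.
Qed.

(* The braiding b ⊗ a ≅ a ⊗ b carries the nested duality to the one used for
   the monoidal structure of the dual functor. *)
Lemma is_dual_shuffle x y a b (eva : hom C (tns a x) I) (coeva : hom C I (tns x a))
  (evb : hom C (tns b y) I) (coevb : hom C I (tns y b)) :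
  is_dual C eva coeva -> is_dual C evb coevb ->
  is_dual C (λ I ∘ ((eva ⊗ evb) ∘ shuffle C a b x y))
            (shuffle C x a y b ∘ ((coeva ⊗ coevb) ∘ λ' I)).
Proof.
  move=> dual_a dual_b. rewrite ev_shuffle coev_shuffle.
  apply: is_dual_transport; [exact: is_dual_nested | exact: braid_braid | exact: braid_braid].
Qed.

Lemma shuffle_natural_l a a' b b' c d (f : hom C a a') (g : hom C b b') :
  shuffle C a' b' c d ∘ ((f ⊗ g) ⊗ 1_ (tns c d))
  = ((f ⊗ 1_ c) ⊗ (g ⊗ 1_ d)) ∘ shuffle C a b c d.
Proof.
  rewrite /shuffle. right_assoc. rewrite -tensm11. rw assoc_natural.
  rewrite tensm11 (tensm_split _ _ _ _ f). right_assoc.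
  do 3 rwb interchange. rw assoc_inv_natural_l.
  rw (comp_whiskerl _ _ _ (α' b' c d) (g ⊗ 1_ (tns c d)) a).
  rw assoc_inv_natural_l. rewrite -comp_whiskerl. right_assoc.
  rw (comp_whiskerl _ _ _ (β b' c ⊗ 1_ d) ((g ⊗ 1_ c) ⊗ 1_ d) a).
  rw comp_whiskerr. rw braid_natural_l. rewrite -comp_whiskerr -comp_whiskerl. right_assoc.
  rw (comp_whiskerl _ _ _ (α c b' d) ((1_ c ⊗ g) ⊗ 1_ d) a).
  rw assoc_natural_m. rewrite -comp_whiskerl. right_assoc.
  rw assoc_inv_natural_r. rw comp_tensm. by rewrite compf1 comp1f.
Qed.

Lemma dual_mor_ev (Dl : Duals C) (HD : DualsLaws Dl) x y (f : hom C x y) :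
  dev Dl x ∘ (dual_mor Dl f ⊗ 1_ x) = dev Dl y ∘ (1_ (dob Dl y) ⊗ f).
Proof. exact: dual_iso_ev. Qed.

Lemma is_dual_par (Dl : Duals C) (HD : DualsLaws Dl) x y :
  is_dual C (ev_par Dl x y) (coev_par Dl x y).
Proof. exact: is_dual_shuffle. Qed.

End Duality.

Section MonoidalFunctor.
Context {C D : RawSMC} {HC : SMCLaws C} {HD : SMCLaws D}.
Context {F : FunData C D} {HF : SMFunctorLaws F}.
Notation μ := (fmu F).
Notation μ' := (fmu_inv F).
Notation ε := (feps F).
Notation ε' := (feps_inv F).
Notation Fm := (fmap F).
Notation Fo := (fob F).

Lemma fmap1 x : Fm (1_ x) = 1_ (Fo x).
Proof. exact: fmap_id. Qed.
Lemma comp_fmap x y z (g : hom C y z) (f : hom C x y) : Fm g ∘ Fm f = Fm (g ∘ f).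
Proof. by rewrite fmap_comp. Qed.

Lemma fmu_fmu_inv x y : μ x y ∘ μ' x y = 1_ _.
Proof. by case: (fmu_iso _ _ _ HF x y). Qed.
Lemma fmu_inv_fmu x y : μ' x y ∘ μ x y = 1_ _.
Proof. by case: (fmu_iso _ _ _ HF x y). Qed.
Lemma feps_feps_inv : ε ∘ ε' = 1_ _.
Proof. by case: (feps_iso _ _ _ HF). Qed.
Lemma feps_inv_feps : ε' ∘ ε = 1_ _.
Proof. by case: (feps_iso _ _ _ HF). Qed.

Lemma fmu_natural x x' y y' (f : hom C x x') (g : hom C y y') :
  μ x' y' ∘ (Fm f ⊗ Fm g) = Fm (f ⊗ g) ∘ μ x y.
Proof. by rewrite fmu_nat. Qed.
Lemma fmu_natural_l x y y' (g : hom C y y') :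
  μ x y' ∘ (1_ (Fo x) ⊗ Fm g) = Fm (1_ x ⊗ g) ∘ μ x y.
Proof. by rewrite -fmap1 fmu_natural. Qed.
Lemma fmu_natural_r x x' y (f : hom C x x') :
  μ x' y ∘ (Fm f ⊗ 1_ (Fo y)) = Fm (f ⊗ 1_ y) ∘ μ x y.
Proof. by rewrite -fmap1 fmu_natural. Qed.
Lemma fmu_assocE x y z :
  μ x (tns y z) ∘ ((1_ (Fo x) ⊗ μ y z) ∘ α (Fo x) (Fo y) (Fo z))
  = Fm (α x y z) ∘ (μ (tns x y) z ∘ (μ x y ⊗ 1_ (Fo z))).
Proof. by rewrite fmu_assoc. Qed.
Lemma fmu_lunitE x : λ (Fo x) = Fm (λ x) ∘ (μ (tunit C) x ∘ (ε ⊗ 1_ (Fo x))).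
Proof. by rewrite fmu_lunit. Qed.
Lemma fmu_runitE x : ρ (Fo x) = Fm (ρ x) ∘ (μ x (tunit C) ∘ (1_ (Fo x) ⊗ ε)).
Proof. by rewrite fmu_runit. Qed.
Lemma fmu_braidE x y : μ y x ∘ β (Fo x) (Fo y) = Fm (β x y) ∘ μ x y.
Proof. by rewrite fmu_braid. Qed.

Lemma fmap_lunit_inv x :
  μ (tunit C) x ∘ ((ε ⊗ 1_ (Fo x)) ∘ λ' (Fo x)) = Fm (λ' x).
Proof.
  apply: (retraction_mono _ _ (Fm (λ x)) (Fm (λ' x))).
    by rewrite comp_fmap lunit_inv_lunit fmap1.
  rewrite comp_fmap lunit_lunit_inv fmap1. right_assoc. rwb fmu_lunitE.
  exact: lunit_lunit_inv.
Qed.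
Lemma fmap_runit_inv x :
  μ x (tunit C) ∘ ((1_ (Fo x) ⊗ ε) ∘ ρ' (Fo x)) = Fm (ρ' x).
Proof.
  apply: (retraction_mono _ _ (Fm (ρ x)) (Fm (ρ' x))).
    by rewrite comp_fmap runit_inv_runit fmap1.
  rewrite comp_fmap runit_runit_inv fmap1. right_assoc. rwb fmu_runitE.
  exact: runit_runit_inv.
Qed.
Lemma fmap_assoc_inv x y z :
  μ (tns x y) z ∘ ((μ x y ⊗ 1_ (Fo z)) ∘ α' (Fo x) (Fo y) (Fo z))
  = Fm (α' x y z) ∘ (μ x (tns y z) ∘ (1_ (Fo x) ⊗ μ y z)).
Proof.
  apply: (retraction_mono _ _ (Fm (α x y z)) (Fm (α' x y z))).
    by rewrite comp_fmap assoc_inv_assoc fmap1.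
  rw comp_fmap. rewrite assoc_assoc_inv fmap1 comp1f. right_assoc.
  rwb fmu_assocE. by cancel_isos.
Qed.

Definition fmap_ev x xd (ev : hom C (tns xd x) (tunit C))
  : hom D (tns (Fo xd) (Fo x)) (tunit D) :=
  ε' ∘ (Fm ev ∘ μ xd x).
Definition fmap_coev x xd (coev : hom C (tunit C) (tns x xd))
  : hom D (tunit D) (tns (Fo x) (Fo xd)) :=
  μ' x xd ∘ (Fm coev ∘ ε).

Lemma fmap_is_dual x xd (ev : hom C (tns xd x) (tunit C))
  (coev : hom C (tunit C) (tns x xd)) :
  is_dual C ev coev -> is_dual D (fmap_ev x xd ev) (fmap_coev x xd coev).
Proof.
  move=> [zigzag_l zigzag_r]. rewrite /fmap_ev /fmap_coev.
  split; split_whiskers; right_assoc.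
  - rewrite fmu_runitE. right_assoc. rw comp_whiskerl. rw feps_feps_inv. cancel_isos.
    rw fmu_natural_l. rw fmu_assocE. rw comp_whiskerr. rw fmu_fmu_inv. cancel_isos.
    rw fmu_natural_r. rw fmap_lunit_inv. do 4 rw comp_fmap. by rewrite zigzag_l fmap1.
  - rewrite fmu_lunitE. right_assoc. rw comp_whiskerr. rw feps_feps_inv. cancel_isos.
    rw fmu_natural_r. rw fmap_assoc_inv. rw comp_whiskerl. rw fmu_fmu_inv. cancel_isos.
    rw fmu_natural_l. rw fmap_runit_inv. do 4 rw comp_fmap. by rewrite zigzag_r fmap1.
Qed.

Lemma fmap_shuffle a b c d :
  Fm (shuffle C a b c d) ∘ (μ (tns a b) (tns c d) ∘ (μ a b ⊗ μ c d))
  = μ (tns a c) (tns b d) ∘ ((μ a c ⊗ μ b d) ∘ shuffle D (Fo a) (Fo b) (Fo c) (Fo d)).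
Proof.
  rewrite /shuffle -!comp_fmap (tensm_split _ _ _ _ (μ a b) (μ c d)). right_assoc.
  rwb fmu_assocE. rw assoc_natural_r. rwb fmu_natural_l. do 2 rw comp_whiskerl.
  rwb fmap_assoc_inv. split_whiskers. right_assoc.
  rwb fmu_natural_l. rw comp_whiskerl. rwb fmu_natural_r. rw comp_whiskerl. rw comp_whiskerr.
  rwb fmu_braidE. split_whiskers. right_assoc.
  rwb fmu_natural_l. do 2 rw comp_whiskerl. rwb fmu_assocE. split_whiskers. right_assoc.
  rwb fmap_assoc_inv. rw assoc_inv_natural_r. by rwb (tensm_split _ _ _ _ (μ a c) (μ b d)).
Qed.

Lemma fmap_lunit_unit :
  ε' ∘ (Fm (λ (tunit C)) ∘ μ (tunit C) (tunit C)) = λ (tunit D) ∘ (ε' ⊗ ε').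
Proof.
  apply: (section_epi _ _ (ε ⊗ 1_ (Fo (tunit C))) (ε' ⊗ 1_ (Fo (tunit C)))).
    by rewrite comp_whiskerr feps_feps_inv tensm11.
  right_assoc. rwb fmu_lunitE. rw comp_tensm. rewrite feps_inv_feps compf1.
  by rw lunit_natural.
Qed.

Lemma fmap_ev_par x xd y yd (evx : hom C (tns xd x) (tunit C))
  (evy : hom C (tns yd y) (tunit C)) :
  λ (tunit D) ∘ ((fmap_ev x xd evx ⊗ fmap_ev y yd evy)
                  ∘ shuffle D (Fo xd) (Fo yd) (Fo x) (Fo y))
  = ε' ∘ (Fm (λ (tunit C) ∘ ((evx ⊗ evy) ∘ shuffle C xd yd x y))
          ∘ (μ (tns xd yd) (tns x y) ∘ (μ xd yd ⊗ μ x y))).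
Proof.
  rewrite -2!comp_fmap. right_assoc. rw fmap_shuffle. rwb fmu_natural.
  rw fmap_lunit_unit. do 2 rw comp_tensm. by rewrite /fmap_ev; right_assoc.
Qed.

End MonoidalFunctor.

Section ContravariantFunctor.
Context {C : RawSMC} {d : FunData C (op C)} {Hd : SMFunctorLaws d}.
Notation "'dm' f" := (fmap d f : hom C _ _) (at level 9, f at level 9).
Notation "'μd' x y" := (fmu d x y : hom C (fob d (tns x y)) (tns (fob d x) (fob d y)))
  (at level 9, x at level 9, y at level 9).
Notation "'μd'' x y" := (fmu_inv d x y : hom C (tns (fob d x) (fob d y)) (fob d (tns x y)))
  (at level 9, x at level 9, y at level 9).

Lemma op_fmap1 x : dm (1_ x) = 1_ (fob d x).
Proof. exact: fmap_id. Qed.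
Lemma op_comp_fmap x y z (f : hom C x y) (g : hom C y z) : dm f ∘ dm g = dm (g ∘ f).
Proof. by rewrite (fmap_comp _ _ _ Hd). Qed.
Lemma op_fmu_fmu_inv x y : μd x y ∘ μd' x y = 1_ _.
Proof. by case: (fmu_iso _ _ _ Hd x y). Qed.
Lemma op_fmu_inv_fmu x y : μd' x y ∘ μd x y = 1_ _.
Proof. by case: (fmu_iso _ _ _ Hd x y). Qed.

Lemma op_fmu_natural x x' y y' (f : hom C x x') (g : hom C y y') :
  μd x y ∘ dm (f ⊗ g) = (dm f ⊗ dm g) ∘ μd x' y'.
Proof. exact: (fmu_nat _ _ _ Hd). Qed.

Context {HC : SMCLaws C}.

Lemma op_fmu_inv_natural_l x y y' (g : hom C y y') :
  μd' x y ∘ (1_ (fob d x) ⊗ dm g) = dm (1_ x ⊗ g) ∘ μd' x y'.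
Proof.
  apply: (retraction_mono _ _ (μd x y) (μd' x y)); first exact: op_fmu_inv_fmu.
  right_assoc. rw op_fmu_fmu_inv. rw op_fmu_natural. rw op_fmu_fmu_inv.
  by rewrite op_fmap1; cancel_isos.
Qed.

End ContravariantFunctor.

Section Zeta.
Context {C1 C2 : RawSMC} {HC1 : SMCLaws C1} {HC2 : SMCLaws C2}.
Context {D1 : Duals C1} {D2 : Duals C2} (HD1 : DualsLaws D1) (HD2 : DualsLaws D2).
Context {F : FunData C1 C2} {HF : SMFunctorLaws F}.
Notation "'ζ' x" := (zeta D1 D2 F x : hom C2 (fob F (dob D1 x)) (dob D2 (fob F x)))
  (at level 9, x at level 9).

Lemma zeta_ev x : dev D2 (fob F x) ∘ (ζ x ⊗ 1_ (fob F x)) = evF D1 F x.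
Proof. exact: dual_iso_ev. Qed.

Lemma fmap_dob_is_dual x : is_dual C2 (evF D1 F x) (fmap_coev x (dob D1 x) (dcoev D1 x)).
Proof. exact: fmap_is_dual. Qed.

Lemma zeta_coev x :
  (1_ (fob F x) ⊗ ζ x) ∘ (fmu_inv F x (dob D1 x) ∘ (fmap F (dcoev D1 x) ∘ feps F))
  = dcoev D2 (fob F x).
Proof. exact: (dual_iso_coev _ _ _ _ _ _ (fmap_dob_is_dual x)). Qed.

Lemma zeta_natural x y (f : hom C1 x y) :
  dual_mor D2 (fmap F f) ∘ ζ y = ζ x ∘ fmap F (dual_mor D1 f).
Proof.
  apply: (dual_ev_inj _ _ _ _ (HD2 (fob F x))).
  split_whiskers_r. right_assoc.
  rw (dual_mor_ev _ HD2). rwb interchange. rw zeta_ev. rewrite /evF. right_assoc.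
  rw fmu_natural_l. rw comp_fmap. rw zeta_ev. rewrite /evF. right_assoc.
  rw fmu_natural_r. rw comp_fmap. by rewrite (dual_mor_ev _ HD1).
Qed.

Definition zeta_inv x : hom C2 (dob D2 (fob F x)) (fob F (dob D1 x)) :=
  dual_iso C2 (dev D2 (fob F x)) (fmap_coev x (dob D1 x) (dcoev D1 x)).

Lemma zeta_zeta_inv x : ζ x ∘ zeta_inv x = 1_ _.
Proof.
  apply: (dual_ev_inj _ _ _ _ (HD2 (fob F x))). split_whiskers_r. right_assoc.
  rw zeta_ev. rw (dual_iso_ev _ _ _ _ (fmap_dob_is_dual x)). by cancel_isos.
Qed.

Lemma zeta_inv_zeta x : zeta_inv x ∘ ζ x = 1_ _.
Proof.
  apply: (dual_ev_inj _ _ _ _ (fmap_dob_is_dual x)). split_whiskers_r. right_assoc.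
  rw (dual_iso_ev _ _ _ _ (fmap_dob_is_dual x)). rw zeta_ev. by cancel_isos.
Qed.

(* The unit and tensor components of [MonNatIsoLaws] for ζ, as [simpl] presents
   them: [dual_iso _ (λ' I)] and [dual_iso _ (coev_par _ _ _)] are the monoidal
   constraints of [dualF]. *)
Lemma zeta_feps :
  dual_iso C2 (dev D2 (tunit C2)) (λ' (tunit C2)) ∘ dual_mor D2 (feps F) ∘ ζ (tunit C1)
  = feps_inv F ∘ fmap F (dual_iso C1 (dev D1 (tunit C1)) (λ' (tunit C1))).
Proof.
  apply: (dual_ev_inj _ _ _ _ (@unit_is_dual C2 HC2)). split_whiskers_r. right_assoc.
  rw (dual_iso_ev _ _ _ _ (@unit_is_dual C2 HC2)). rw (dual_mor_ev _ HD2). rwb interchange.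
  rw zeta_ev. rewrite /evF. right_assoc. rewrite lunit_unit. rw runit_natural.
  rewrite fmu_runitE. right_assoc. rwb interchange. rw fmu_natural_r. rw comp_fmap.
  by rewrite -lunit_unit (dual_iso_ev _ _ _ _ (@unit_is_dual C1 HC1)).
Qed.

Lemma zeta_fmu x y :
  dual_iso C2 (dev D2 (tens C2 (fob F x) (fob F y))) (coev_par D2 (fob F x) (fob F y))
  ∘ dual_mor D2 (fmu F x y) ∘ ζ (tens C1 x y)
  = (ζ x ⊗ ζ y) ∘ (fmu_inv F (dob D1 x) (dob D1 y)
                   ∘ fmap F (dual_iso C1 (dev D1 (tens C1 x y)) (coev_par D1 x y))).
Proof.
  pose proof (is_dual_par D2 HD2 (fob F x) (fob F y)) as dual_par.
  apply (dual_ev_inj _ _ _ _ dual_par). right_assoc. split_whiskers_r. right_assoc.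
  rw (dual_iso_ev _ _ _ _ dual_par). rw (dual_mor_ev _ HD2). rwb interchange.
  rw zeta_ev. rewrite /evF /ev_par. right_assoc.
  rw shuffle_natural_l. do 2 rw comp_tensm. rewrite !zeta_ev. rw fmap_ev_par.
  rewrite (tensm_split' _ _ _ _ (fmu F (dob D1 x) (dob D1 y)) (fmu F x y)). right_assoc.
  cancel_isos. rw comp_whiskerr. rw fmu_fmu_inv. cancel_isos.
  rwb interchange. rw fmu_natural_r. rw comp_fmap.
  rewrite -{1}(dual_iso_ev _ _ _ _ (is_dual_par D1 HD1 x y) _ (dev D1 (tns x y))) /ev_par.
  by right_assoc.
Qed.

End Zeta.

Section AntiInvolutiveFunctor.
Context {C1 C2 : RawSMC} {HC2 : SMCLaws C2}.
Context {A1 : AntiInv C1} {A2 : AntiInv C2} {HA1 : AntiInvLaws A1} {HA2 : AntiInvLaws A2}.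
Context {F : AIFun A1 A2} {HF : AIFunLaws F}.
Notation Fn := (aif_F F).
Notation d1 := (ai_d A1).
Notation d2 := (ai_d A2).
Notation "'φ' x" := (aif_phi F x : hom C2 (fob Fn (fob d1 x)) (fob d2 (fob Fn x)))
  (at level 9, x at level 9).
Notation "'φ'' x" := (aif_phi_inv F x : hom C2 (fob d2 (fob Fn x)) (fob Fn (fob d1 x)))
  (at level 9, x at level 9).
Notation "'d1m' f" := (fmap d1 f : hom C1 _ _) (at level 9, f at level 9).
Notation "'d2m' f" := (fmap d2 f : hom C2 _ _) (at level 9, f at level 9).
Notation "'μd1' x y" := (fmu d1 x y : hom C1 (fob d1 (tns x y)) (tns (fob d1 x) (fob d1 y)))
  (at level 9, x at level 9, y at level 9).
Notation "'μd1'' x y" := (fmu_inv d1 x y : hom C1 (tns (fob d1 x) (fob d1 y)) (fob d1 (tns x y)))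
  (at level 9, x at level 9, y at level 9).
Notation "'μd2' x y" := (fmu d2 x y : hom C2 (fob d2 (tns x y)) (tns (fob d2 x) (fob d2 y)))
  (at level 9, x at level 9, y at level 9).
Notation "'μd2'' x y" := (fmu_inv d2 x y : hom C2 (tns (fob d2 x) (fob d2 y)) (fob d2 (tns x y)))
  (at level 9, x at level 9, y at level 9).

Lemma phi_inv_phi x : φ' x ∘ φ x = 1_ _.
Proof. by case: (aif_phi_inv_iso _ _ _ _ _ HF x). Qed.
Lemma phi_phi_inv x : φ x ∘ φ' x = 1_ _.
Proof. by case: (aif_phi_inv_iso _ _ _ _ _ HF x). Qed.

Lemma phi_natural x y (f : hom C1 x y) : d2m (fmap Fn f) ∘ φ y = φ x ∘ fmap Fn (d1m f).
Proof. exact: (nat_natural _ _ _ _ _ (aif_phi_mon _ _ _ _ _ HF)). Qed.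

Lemma phi_fmu x y :
  μd2 (fob Fn x) (fob Fn y) ∘ (d2m (fmu Fn x y) ∘ φ (tens C1 x y))
  = (φ x ⊗ φ y) ∘ (fmu_inv Fn (fob d1 x) (fob d1 y) ∘ fmap Fn (μd1 x y)).
Proof.
  have := nat_mu _ _ _ _ _ (aif_phi_mon _ _ _ _ _ HF) x y.
  by rewrite /= -!compA.
Qed.

Lemma phi_feps :
  (feps d2 : hom C2 _ _) ∘ (d2m (feps Fn) ∘ φ (tunit C1))
  = feps_inv Fn ∘ fmap Fn (feps d1 : hom C1 _ _).
Proof.
  have := nat_eps _ _ _ _ _ (aif_phi_mon _ _ _ _ _ HF).
  by rewrite /= -!compA.
Qed.

Lemma phi_inv_natural x y (f : hom C1 x y) :
  fmap Fn (d1m f) ∘ φ' y = φ' x ∘ d2m (fmap Fn f).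
Proof.
  apply: (retraction_mono _ _ (φ x) (φ' x)); first exact: phi_inv_phi.
  right_assoc. rwb phi_natural. rw phi_phi_inv. rw phi_phi_inv. by cancel_isos.
Qed.

Lemma phi_inv_fmu x y :
  fmap Fn (μd1' x y) ∘ (fmu Fn (fob d1 x) (fob d1 y) ∘ (φ' x ⊗ φ' y))
  = φ' (tens C1 x y) ∘ (d2m (fmu_inv Fn x y) ∘ μd2' (fob Fn x) (fob Fn y)).
Proof.
  have phi_inv_mu : fmap Fn (μd1 x y) ∘ φ' (tens C1 x y)
      = fmu Fn (fob d1 x) (fob d1 y)
        ∘ ((φ' x ⊗ φ' y) ∘ (μd2 (fob Fn x) (fob Fn y) ∘ d2m (fmu Fn x y))).
    apply: (retraction_mono _ _ ((φ x ⊗ φ y) ∘ fmu_inv Fn (fob d1 x) (fob d1 y))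
                                (fmu Fn (fob d1 x) (fob d1 y) ∘ (φ' x ⊗ φ' y))).
      right_assoc. rw comp_tensm. rewrite !phi_inv_phi. cancel_isos. exact: fmu_fmu_inv.
    right_assoc. rwb phi_fmu. rw phi_phi_inv. cancel_isos. rw fmu_inv_fmu. cancel_isos.
    rw comp_tensm. rewrite !phi_phi_inv. by cancel_isos.
  apply: (retraction_mono _ _ (fmap Fn (μd1 x y)) (fmap Fn (μd1' x y))).
    by rewrite comp_fmap op_fmu_inv_fmu fmap1.
  right_assoc. rw comp_fmap. rewrite op_fmu_fmu_inv fmap1 comp1f.
  rw phi_inv_mu. rw (op_comp_fmap (d := d2)). rw fmu_inv_fmu. rewrite op_fmap1.
  cancel_isos. rw op_fmu_fmu_inv. by cancel_isos.
Qed.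

Lemma phi_inv_feps :
  feps_inv Fn ∘ (fmap Fn (feps d1 : hom C1 _ _) ∘ φ' (tunit C1))
  = (feps d2 : hom C2 _ _) ∘ d2m (feps Fn).
Proof. rwb phi_feps. rw phi_phi_inv. by cancel_isos. Qed.

End AntiInvolutiveFunctor.

Section ZetaAntiInvolutive.
Context {C1 C2 : RawSMC} {HC1 : SMCLaws C1} {HC2 : SMCLaws C2}.
Context {A1 : AntiInv C1} {A2 : AntiInv C2} {HA1 : AntiInvLaws A1} {HA2 : AntiInvLaws A2}.
Context {D1 : Duals C1} {D2 : Duals C2} (HD1 : DualsLaws D1) (HD2 : DualsLaws D2).
Context {F : AIFun A1 A2} {HF : AIFunLaws F}.
Notation Fn := (aif_F F).
Notation d1 := (ai_d A1).
Notation d2 := (ai_d A2).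
Notation "'ζ' x" := (zeta D1 D2 Fn x : hom C2 (fob Fn (dob D1 x)) (dob D2 (fob Fn x)))
  (at level 9, x at level 9).

Lemma zeta_anti_involutive x :
  dual_mor D2 (aif_phi F x)
  ∘ dual_iso C2 (ev_d A2 D2 (fob Fn x)) (dcoev D2 (fob d2 (fob Fn x)))
  = ζ (fob d1 x)
    ∘ (fmap Fn (dual_iso C1 (ev_d A1 D1 x) (dcoev D1 (fob d1 x))) ∘ aif_phi_inv F (dob D1 x))
    ∘ fmap d2 (ζ x).
Proof.
  apply: (dual_ev_inj _ _ _ _ (HD2 (fob Fn (fob d1 x)))).
  right_assoc. split_whiskers_r. right_assoc.
  rw (dual_mor_ev _ HD2). rwb interchange. cbn [fcomp fob].
  rw (dual_iso_ev _ _ _ _ (HD2 (fob d2 (fob Fn x)))). rewrite {1}/ev_d. right_assoc.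
  rewrite (braid_natural_r (HC := HC2)). rw (zeta_ev (D1 := D1) HD2 (F := Fn)).
  rewrite /evF. right_assoc.
  rw fmu_natural_r. rw comp_fmap. rewrite (dual_iso_ev _ _ _ _ (HD1 (fob d1 x))) /ev_d.
  repeat rewrite <- comp_fmap. right_assoc.
  rwb (fmu_braidE (F := Fn)). do 2 rw braid_natural_l.
  (* Inserting φ'_x ∘ φ_x creates the factor φ'_x ⊗ φ'_{x^∨} consumed by [phi_inv_fmu]. *)
  have split_phi : 1_ _ ⊗ aif_phi_inv F (dob D1 x)
      = (aif_phi_inv F x ⊗ aif_phi_inv F (dob D1 x)) ∘ (aif_phi F x ⊗ 1_ _).
    by rewrite comp_tensm phi_inv_phi compf1.
  rewrite split_phi. right_assoc.
  rw phi_inv_fmu. rw phi_inv_natural. rw phi_inv_feps.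
  rw interchange. rw (op_fmu_inv_natural_l (d := d2)). do 3 rw (op_comp_fmap (d := d2)).
  by rw (zeta_coev (D2 := D2) HD1 (F := Fn)).
Qed.

End ZetaAntiInvolutive.

Theorem mainTheorem13 (C1 C2 : RawSMC)
  (HC1 : SMCLaws C1) (HC2 : SMCLaws C2)
  (A1 : AntiInv C1) (A2 : AntiInv C2)
  (HA1 : AntiInvLaws A1) (HA2 : AntiInvLaws A2)
  (D1 : Duals C1) (D2 : Duals C2)
  (HD1 : DualsLaws D1) (HD2 : DualsLaws D2)
  (F : AIFun A1 A2) (HF : AIFunLaws F) :
  AINatLaws (aifcomp (dualAIF A2 D2) F) (aifcomp (fopAIF F) (dualAIF A1 D1))
            (zeta D1 D2 (aif_F F)).
Proof.
  split; [split|] => /=.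
  - move=> x y f. exact: zeta_natural.
  - move=> x y. exact: zeta_fmu.
  - exact: zeta_feps.
  - move=> x. exists (zeta_inv x).
    split; [exact: zeta_zeta_inv | exact: zeta_inv_zeta].
  - move=> x. exact: zeta_anti_involutive.
Qed.
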